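(* Let $\pi=(\pi_n^{n+1}\colon(X_{n+1},f_{n+1})\to(X_n,f_n))_{n\ge1}$ be an inverse sequence of equivariant maps satisfying MLC(1), with each $(X_n,f_n)$ a transitive subshift of finite type, and let $(X,f)=\lim_\pi(X_n,f_n)$ with a metric $d$ compatible with its topology. Let $D_\ast=(D_n)_{n\ge1}\in\mathcal{D}_\pi$ be such that $(\pi_n^{n+1}|_{D_{n+1}}\colon D_{n+1}\to D_n)_{n\ge1}$ satisfies MLC(1), and let $D=[D_\ast]=\{x=(x_n)_{n\ge1}\in X:x_n\in D_n\ \forall n\}$. Then for any $\epsilon>0$ there is $\delta>0$ such that every $\delta$-pseudo orbit $(x^{(i)})_{i\ge0}$ of $f$ with $x^{(0)}\in D$ is $\epsilon$-shadowed by some $x\in D$.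
   Context: Equivariant means $\pi_n^{n+1}$ continuous with $f_n\circ\pi_n^{n+1}=\pi_n^{n+1}\circ f_{n+1}$; $\pi_n^m=\pi_n^{n+1}\circ\cdots\circ\pi_{m-1}^m$. $X=\{(x_n)\in\prod_n X_n:\pi_n^{n+1}(x_{n+1})=x_n\ \forall n\}$ (product topology), $f((x_n))=(f_n(x_n))$. An inverse sequence $(p_n\colon Z_{n+1}\to Z_n)$ satisfies MLC(1) if $p_n(Z_{n+1})=p_n(p_{n+1}(Z_{n+2}))$ for all $n$. A subshift of finite type is $(Z,\sigma|_Z)$ with $\sigma$ the shift $(x_i)_{i\ge1}\mapsto(x_{i+1})_{i\ge1}$ on $S^{\mathbb N}$, $S$ finite, and $Z=\{x:(x_i,\dots,x_{i+N})\in F\ \forall i\}$ for some $N>0$, $F\subset S^{N+1}$; transitive means for nonempty open $U,V$ some $k>0$ has $\sigma^k(U)\cap V\neq\emptyset$. For a chain transitive map $g$ of a compact metric space: a $\delta$-chain is $(y_i)_{i=0}^k$, $k>0$, with $d(g(y_i),y_{i+1})\le\delta$, a $\delta$-cycle of length $k$ if $y_0=y_k$; $m(g,\delta)$ is the gcd of lengths of $\delta$-cycles; $y\sim_{g,\delta}z$ iff a $\delta$-chain from $y$ to $z$ of length divisible by $m(g,\delta)$ exists; $y\sim_g z$ iff $y\sim_{g,\delta}z$ for all $\delta$; $\mathcal{D}(g)$ is the set of its equivalence classes. $\mathcal{D}_\pi=\{(D_n)\in\prod_n\mathcal{D}(f_n):\pi_n^{n+1}(D_{n+1})\subset D_n\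 \forall n\}$. A $\delta$-pseudo orbit of $f$ is $(x^{(i)})_{i\ge0}$ with $d(f(x^{(i)}),x^{(i+1)})\le\delta$ for all $i$; it is $\epsilon$-shadowed by $x$ if $d(f^i(x),x^{(i)})\le\epsilon$ for all $i\ge0$. *)

From Stdlib Require Export Reals List Arith.
Open Scope R_scope.

Definition shift {A : Type} (x : nat -> A) : nat -> A := fun i => x (S i).

Definition agree {A : Type} (k : nat) (x y : nat -> A) : Prop :=
  forall i, (i < k)%nat -> x i = y i.

Definition finite_type (A : Type) : Prop := exists l : list A, forall a, In a l.

Definition word {A : Type} (x : nat -> A) (i N : nat) : list A :=
  map (fun j => x (i + j)%nat) (seq 0 (N + 1)).

(** Z is a subshift of finite type: S finite, Z = {x : (x_i..x_{i+N}) in F for all i},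
    N > 0, F a set of words (automatically finite since A is finite). *)
Definition is_SFT {A : Type} (Z : (nat -> A) -> Prop) : Prop :=
  finite_type A /\
  exists (N : nat) (F : list A -> Prop), (0 < N)%nat /\
    forall x, Z x <-> forall i, F (word x i N).

(** U is open in Z (subspace of the product of discrete topologies). *)
Definition rel_open {A : Type} (Z U : (nat -> A) -> Prop) : Prop :=
  (forall x, U x -> Z x) /\
  forall x, U x -> exists m, forall y, Z y -> agree m x y -> U y.

Definition transitive_SFT {A : Type} (Z : (nat -> A) -> Prop) : Prop :=
  is_SFT Z /\
  forall U V, rel_open Z U -> rel_open Z V ->
    (exists x, U x) -> (exists x, V x) ->
    exists k, (0 < k)%nat /\ exists x, U x /\ V (Nat.iter k shift x).

(** Standard metric on A^N: d(x,y) = (1/2)^m, m the first index where x, y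
    differ (0 if x = y).  [dist_le d x y] says d(x,y) <= delta. *)
Definition dist_le {A : Type} (delta : R) (x y : nat -> A) : Prop :=
  forall i, x i <> y i -> (/ 2) ^ i <= delta.

Definition chain {A : Type} (Z : (nat -> A) -> Prop) (delta : R)
    (y : nat -> (nat -> A)) (k : nat) : Prop :=
  (0 < k)%nat /\ (forall i, (i <= k)%nat -> Z (y i)) /\
  (forall i, (i < k)%nat -> dist_le delta (shift (y i)) (y (S i))).

Definition is_cycle_gcd {A : Type} (Z : (nat -> A) -> Prop) (delta : R) (m : nat) : Prop :=
  (forall y k, chain Z delta y k -> y 0%nat = y k -> Nat.divide m k) /\
  (forall c, (forall y k, chain Z delta y k -> y 0%nat = y k -> Nat.divide c k) ->
     Nat.divide c m).

Definition chain_rel {A : Type} (Z : (nat -> A) -> Prop) (delta : R) (a b : nat -> A) : Prop :=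
  exists m, is_cycle_gcd Z delta m /\
  exists y k, chain Z delta y k /\ y 0%nat = a /\ y k = b /\ Nat.divide m k.

Definition chain_equiv {A : Type} (Z : (nat -> A) -> Prop) (a b : nat -> A) : Prop :=
  forall delta, 0 < delta -> chain_rel Z delta a b.

Definition is_chain_class {A : Type} (Z D : (nat -> A) -> Prop) : Prop :=
  exists a, Z a /\ forall b, D b <-> (Z b /\ chain_equiv Z a b).

(** Bonding maps p n = pi_n^{n+1} : X_{n+1} -> X_n (given on the ambient full
    shift; only their values on X_{n+1} matter). *)
Definition equivariant_seq (S : nat -> Type) (X : forall n, (nat -> S n) -> Prop)
    (p : forall n, (nat -> S (Datatypes.S n)) -> (nat -> S n)) : Prop :=
  forall n,
    (forall y, X (Datatypes.S n) y -> X n (p n y)) /\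
    (forall y, X (Datatypes.S n) y -> forall m, exists m', forall z,
        X (Datatypes.S n) z -> agree m' y z -> agree m (p n y) (p n z)) /\
    (forall y, X (Datatypes.S n) y -> p n (shift y) = shift (p n y)).

Definition MLC1 (S : nat -> Type) (Z : forall n, (nat -> S n) -> Prop)
    (p : forall n, (nat -> S (Datatypes.S n)) -> (nat -> S n)) : Prop :=
  forall n (z : nat -> S n),
    (exists y, Z (Datatypes.S n) y /\ p n y = z) <->
    (exists w, Z (Datatypes.S (Datatypes.S n)) w /\ p n (p (Datatypes.S n) w) = z).

Definition LimPt (S : nat -> Type) : Type := forall n, nat -> S n.

Definition inLim (S : nat -> Type) (X : forall n, (nat -> S n) -> Prop)
    (p : forall n, (nat -> S (Datatypes.S n)) -> (nat -> S n)) (x : LimPt S) : Prop :=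
  forall n, X n (x n) /\ p n (x (Datatypes.S n)) = x n.

Definition limf {S : nat -> Type} (x : LimPt S) : LimPt S := fun n => shift (x n).

Definition is_metric_on {T : Type} (P : T -> Prop) (d : T -> T -> R) : Prop :=
  (forall x y, P x -> P y -> 0 <= d x y) /\
  (forall x y, P x -> P y -> (d x y = 0 <-> x = y)) /\
  (forall x y, P x -> P y -> d x y = d y x) /\
  (forall x y z, P x -> P y -> P z -> d x z <= d x y + d y z).

(** Basic neighbourhood of x in the product topology: finitely many coordinates
    n, each constrained to the cylinder of length k of x_n. *)
Definition cyl_nbhd {S : nat -> Type} (x : LimPt S) (L : list (nat * nat)) (y : LimPt S) : Prop :=
  forall nk, In nk L -> agree (snd nk) (y (fst nk)) (x (fst nk)).

(** d induces on P the (subspace of the) product topology: every ball contains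
    a basic neighbourhood and every basic neighbourhood contains a ball. *)
Definition compatible_metric {S : nat -> Type} (P : LimPt S -> Prop)
    (d : LimPt S -> LimPt S -> R) : Prop :=
  (forall x, P x -> forall e, 0 < e -> exists L,
      forall y, P y -> cyl_nbhd x L y -> d x y < e) /\
  (forall x, P x -> forall L, exists e, 0 < e /\
      forall y, P y -> d x y < e -> cyl_nbhd x L y).

Definition in_D_pi (S : nat -> Type) (X : forall n, (nat -> S n) -> Prop)
    (p : forall n, (nat -> S (Datatypes.S n)) -> (nat -> S n))
    (Ds : forall n, (nat -> S n) -> Prop) : Prop :=
  forall n, is_chain_class (X n) (Ds n) /\
    (forall y, Ds (Datatypes.S n) y -> Ds n (p n y)).

Definition bracket (S : nat -> Type) (X : forall n, (nat -> S n) -> Prop)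
    (p : forall n, (nat -> S (Datatypes.S n)) -> (nat -> S n))
    (Ds : forall n, (nat -> S n) -> Prop) (x : LimPt S) : Prop :=
  inLim S X p x /\ forall n, Ds n (x n).

From Stdlib Require Import Lra Lia Classical ClassicalEpsilon FunctionalExtensionality.
Open Scope R_scope.

(* The inverse limit of subshifts over finite alphabets is compact, so the metric d and the
   bonding maps are uniformly controlled by agreement of finitely many symbols in finitely many
   coordinates. A δ-pseudo orbit therefore projects to a sequence in X_{n+1} whose consecutive
   points agree on long initial words, and such a sequence is exactly traced by a point z of the
   subshift of finite type X_{n+1}. Chain classes of a transitive SFT are open: a point sharing a
   long prefix with u is reached from u by a chain whose length is the period of a periodic orbit,
   hence a multiple of m(g, δ). So z lies in D_{n+1}, MLC(1) for D_* threads p_n(z) to a point x of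
   D, and uniform continuity turns the symbolic agreement into ε-shadowing. *)

Lemma agree_le {A} (m m' : nat) (x y : nat -> A) :
  (m' <= m)%nat -> agree m x y -> agree m' x y.
Proof. intros Hm H i Hi; apply H; lia. Qed.

Lemma agree_sym {A} m (x y : nat -> A) : agree m x y -> agree m y x.
Proof. intros H i Hi; symmetry; auto. Qed.

Lemma agree_trans {A} m (x y z : nat -> A) : agree m x y -> agree m y z -> agree m x z.
Proof. intros H1 H2 i Hi; rewrite H1; auto. Qed.

Lemma iter_shift_apply {A} k (x : nat -> A) j : Nat.iter k shift x j = x (k + j)%nat.
Proof.
  revert j; induction k as [|k IH]; intro j; [reflexivity|].
  simpl; unfold shift at 1; rewrite IH; f_equal; lia.
Qed.

Lemma dist_le_refl {A} δ (a : nat -> A) : dist_le δ a a.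
Proof. intros i H; contradiction. Qed.

Lemma exists_half_pow_le δ N : 0 < δ -> exists R, (N <= R)%nat /\ (/ 2) ^ R <= δ.
Proof.
  intros Hδ.
  assert (Hhalf : Rabs (/ 2) < 1) by (rewrite Rabs_pos_eq; lra).
  destruct (pow_lt_1_zero (/ 2) Hhalf δ Hδ) as [M HM].
  exists (Nat.max N M); split; [lia|].
  specialize (HM (Nat.max N M) ltac:(lia)).
  rewrite Rabs_pos_eq in HM; [lra | apply pow_le; lra].
Qed.

Lemma agree_dist_le {A} R δ (a b : nat -> A) :
  (/ 2) ^ R <= δ -> agree R a b -> dist_le δ a b.
Proof.
  intros HR Hab i Hi.
  destruct (Nat.lt_ge_cases i R) as [Hlt | Hge]; [contradiction (Hi (Hab i Hlt))|].
  apply Rle_trans with ((/ 2) ^ R); [|exact HR].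
  rewrite !pow_inv; apply Rinv_le_contravar; [apply pow_lt; lra | apply Rle_pow; lra || lia].
Qed.

(** * Subshifts of finite type *)

Definition determined_by_windows {A} (Z : (nat -> A) -> Prop) (N : nat) : Prop :=
  forall v, (forall i, exists t j, Z t /\
               forall s, (s <= N)%nat -> v (i + s)%nat = t (j + s)%nat) -> Z v.

Lemma is_SFT_windows {A} (Z : (nat -> A) -> Prop) :
  is_SFT Z -> exists N, determined_by_windows Z N.
Proof.
  intros [_ [N [F [_ HZ]]]]; exists N; intros v Hv.
  apply HZ; intro i; destruct (Hv i) as [t [j [Zt Ht]]].
  replace (word v i N) with (word t j N); [exact (proj1 (HZ t) Zt j)|].
  unfold word; apply map_ext_in; intros s Hs; apply in_seq in Hs.
  symmetry; apply Ht; lia.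
Qed.

Definition closed_set {A} (Z : (nat -> A) -> Prop) : Prop :=
  forall c, (forall m, exists t, Z t /\ agree m t c) -> Z c.

Definition splice {A} (k : nat) (a b : nat -> A) : nat -> A :=
  fun j => if (j <? k)%nat then a j else b (j - k)%nat.

Section WindowSFT.

Variables (A : Type) (Z : (nat -> A) -> Prop) (N : nat).
Hypothesis HZ : determined_by_windows Z N.

Lemma sft_shift x : Z x -> Z (shift x).
Proof. intros Hx; apply HZ; intro i; exists x, (S i); split; auto. Qed.

Lemma sft_iter_shift k x : Z x -> Z (Nat.iter k shift x).
Proof. induction k; intros Hx; simpl; auto using sft_shift. Qed.

Lemma sft_closed : closed_set Z.
Proof.
  intros c Hc; apply HZ; intro i.
  destruct (Hc (i + S N)%nat) as [t [Zt Ht]].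
  exists t, i; split; [exact Zt|]; intros s Hs; symmetry; apply Ht; lia.
Qed.

Lemma sft_splice k a b :
  Z a -> Z b -> agree N (fun j => a (k + j)%nat) b -> Z (splice k a b).
Proof.
  intros Za Zb Hab; apply HZ; intro i; unfold splice.
  destruct (Nat.lt_ge_cases i k) as [Hik | Hki].
  - exists a, i; split; [exact Za|]; intros s Hs.
    destruct (Nat.ltb_spec (i + s) k); [reflexivity|].
    rewrite <- Hab by lia; f_equal; lia.
  - exists b, (i - k)%nat; split; [exact Zb|]; intros s Hs.
    destruct (Nat.ltb_spec (i + s) k); [lia|]; f_equal; lia.
Qed.

Lemma sft_periodic k w :
  (0 < k)%nat -> Z w -> agree N (fun j => w (k + j)%nat) w -> Z (fun j => w (j mod k)).
Proof.
  intros Hk Zw Hw.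
  assert (Hmod : forall l, (l < k + N)%nat -> w l = w (l mod k)).
  { intro l; induction l as [l IH] using lt_wf_ind; intro Hl.
    destruct (Nat.lt_ge_cases l k) as [Hlk | Hkl]; [rewrite Nat.mod_small; auto|].
    replace (l mod k) with ((l - k) mod k)
      by (rewrite <- (Nat.Div0.mod_add (l - k) 1 k); f_equal; lia).
    transitivity (w (l - k)%nat); [|apply IH; lia].
    replace l with (k + (l - k))%nat at 1 by lia; exact (Hw (l - k)%nat ltac:(lia)). }
  apply HZ; intro i; exists w, (i mod k); split; [exact Zw|]; intros s Hs.
  rewrite (Hmod (i mod k + s)%nat) by (pose proof (Nat.mod_upper_bound i k); lia).
  rewrite Nat.Div0.add_mod_idemp_l; reflexivity.
Qed.

Lemma sft_shadowing (ys : nat -> nat -> A) M :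
  (N <= M)%nat -> (forall i, Z (ys i)) -> (forall i, agree M (shift (ys i)) (ys (S i))) ->
  exists z, Z z /\ forall i, agree (S M) (Nat.iter i shift z) (ys i).
Proof.
  intros HNM Zys Hys.
  assert (Hdiag : forall t i s, (s + t <= M)%nat -> ys (i + t)%nat s = ys i (s + t)%nat).
  { induction t as [|t IH]; intros i s Hst; [rewrite !Nat.add_0_r; reflexivity|].
    rewrite Nat.add_succ_r, <- (Hys (i + t)%nat s) by lia; unfold shift.
    rewrite IH by lia; f_equal; lia. }
  exists (fun j => ys j 0%nat); split.
  - apply HZ; intro i; exists (ys i), 0%nat; split; [apply Zys|].
    intros s Hs; rewrite Hdiag by lia; reflexivity.
  - intros i j Hj; rewrite iter_shift_apply, Hdiag by lia; reflexivity.
Qed.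

End WindowSFT.

(** * Chain classes of a transitive subshift of finite type *)

Definition divides_cycle_lengths {A} (Z : (nat -> A) -> Prop) (δ : R) (m : nat) : Prop :=
  forall y k, chain Z δ y k -> y 0%nat = y k -> Nat.divide m k.

Lemma chain_app {A} (Z : (nat -> A) -> Prop) δ c1 k1 c2 k2 :
  chain Z δ c1 k1 -> chain Z δ c2 k2 -> c1 k1 = c2 0%nat ->
  exists c, chain Z δ c (k1 + k2) /\ c 0%nat = c1 0%nat /\ c (k1 + k2)%nat = c2 k2.
Proof.
  intros [Hk1 [Z1 D1]] [Hk2 [Z2 D2]] E.
  exists (fun i => if (i <=? k1)%nat then c1 i else c2 (i - k1)%nat).
  split; [split; [lia|split]|split].
  - intros i Hi; destruct (Nat.leb_spec i k1); [auto | apply Z2; lia].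
  - intros i Hi; destruct (Nat.leb_spec i k1), (Nat.leb_spec (S i) k1); try lia; auto.
    + replace i with k1 by lia; rewrite E.
      replace (S k1 - k1)%nat with 1%nat by lia; apply D2; lia.
    + replace (S i - k1)%nat with (S (i - k1)) by lia; apply D2; lia.
  - reflexivity.
  - destruct (Nat.leb_spec (k1 + k2) k1); [lia|]; f_equal; lia.
Qed.

Lemma rel_open_cylinder {A} (Z : (nat -> A) -> Prop) m a :
  rel_open Z (fun x => Z x /\ agree m a x).
Proof.
  split; [intros x [Zx _]; exact Zx|].
  intros x [Zx Hx]; exists m; intros y Zy Hxy; split; [exact Zy | eapply agree_trans; eauto].
Qed.

Section TransitiveSFT.

Variables (A : Type) (Z : (nat -> A) -> Prop) (N : nat).
Hypothesis HZ : determined_by_windows Z N.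

Lemma sft_period_divides δ m k w :
  divides_cycle_lengths Z δ m -> (0 < k)%nat -> Z w ->
  agree N (fun j => w (k + j)%nat) w -> Nat.divide m k.
Proof.
  intros Hm Hk Zw Hw.
  set (z := fun j => w (j mod k)).
  apply (Hm (fun i => Nat.iter i shift z)).
  - split; [exact Hk | split]; intros i _;
      [apply (sft_iter_shift A Z N HZ), (sft_periodic A Z N HZ); auto | apply dist_le_refl].
  - change (z = Nat.iter k shift z); apply functional_extensionality; intro j.
    rewrite iter_shift_apply; unfold z.
    replace (k + j)%nat with (j + 1 * k)%nat by lia; rewrite Nat.Div0.mod_add; reflexivity.
Qed.

Hypothesis HT : transitive_SFT Z.

(* Transitivity gives an orbit from near [shift u] to near [y]; splicing [u 0] in front and [y]
   at the end makes it start near [u] and end exactly at [y]. *)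
Lemma transitive_sft_orbit_to R u y :
  (N <= R)%nat -> Z u -> Z y ->
  exists k w, Z w /\ agree (S R) u w /\ Nat.iter (S k) shift w = y.
Proof.
  intros HNR Zu Zy.
  destruct (proj2 HT _ _ (rel_open_cylinder Z R (shift u)) (rel_open_cylinder Z R y))
    as [k [_ [x [[Zx Hux] [_ Hyx]]]]].
  { exists (shift u); split; [apply (sft_shift A Z N HZ), Zu | intros i _; reflexivity]. }
  { exists y; split; [exact Zy | intros i _; reflexivity]. }
  set (v := splice k x y).
  assert (Hxv : agree (k + R) x v).
  { intros j Hj; unfold v, splice; destruct (Nat.ltb_spec j k); [reflexivity|].
    rewrite (Hyx (j - k)%nat) by lia; rewrite iter_shift_apply; f_equal; lia. }
  assert (Zv : Z v).
  { apply (sft_splice A Z N HZ); auto.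
    intros j Hj; rewrite <- iter_shift_apply; symmetry; apply Hyx; lia. }
  exists k, (splice 1 u v); split; [|split].
  - apply (sft_splice A Z N HZ); auto.
    intros j Hj; rewrite <- Hxv by lia; apply Hux; lia.
  - intros [|j] Hj; [reflexivity|]; unfold splice; simpl.
    rewrite Nat.sub_0_r, <- Hxv by lia; apply Hux; lia.
  - apply functional_extensionality; intro j; rewrite iter_shift_apply; unfold splice, v.
    simpl; rewrite Nat.sub_0_r; unfold splice.
    destruct (Nat.ltb_spec (k + j) k); [lia|]; f_equal; lia.
Qed.

Lemma sft_chain_to_neighbour δ m u y :
  0 < δ -> divides_cycle_lengths Z δ m -> Z u -> Z y -> agree N u y ->
  exists c k, chain Z δ c k /\ c 0%nat = u /\ c k = y /\ Nat.divide m k.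
Proof.
  intros Hδ Hm Zu Zy Huy.
  destruct (exists_half_pow_le δ N Hδ) as [R [HNR HR]].
  destruct (transitive_sft_orbit_to R u y HNR Zu Zy) as [k [w [Zw [Huw Hwy]]]].
  exists (fun i => match i with O => u | _ => Nat.iter i shift w end), (S k).
  split; [|split; [reflexivity | split; [exact Hwy|]]].
  - split; [lia | split].
    + intros [|i] _; [exact Zu | apply (sft_iter_shift A Z N HZ), Zw].
    + intros [|i] _; [|apply dist_le_refl].
      apply (agree_dist_le R); [exact HR|]; intros j Hj; apply Huw; lia.
  - apply (sft_period_divides δ m (S k) w Hm); [lia | exact Zw|].
    intros j Hj; rewrite <- iter_shift_apply, Hwy, <- Huy by lia; exact (Huw j ltac:(lia)).
Qed.

End TransitiveSFT.

Lemma chain_class_sub {A} (Z D : (nat -> A) -> Prop) : is_chain_class Z D -> forall t, D t -> Z t.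
Proof. intros [a [_ HD]] t Dt; apply HD, Dt. Qed.

Lemma chain_class_open {A} (Z D : (nat -> A) -> Prop) :
  transitive_SFT Z -> is_chain_class Z D ->
  exists r, forall u y, D u -> Z y -> agree r u y -> D y.
Proof.
  intros HT [a [Za HD]].
  destruct (is_SFT_windows Z (proj1 HT)) as [N HN].
  exists N; intros u y Du Zy Huy.
  apply HD in Du as [Zu Hau]; apply HD; split; [exact Zy|]; intros δ Hδ.
  destruct (Hau δ Hδ) as [m [Hm [c1 [k1 [Hc1 [E0 [E1 Hk1]]]]]]].
  destruct (sft_chain_to_neighbour A Z N HN HT δ m u y Hδ (proj1 Hm) Zu Zy Huy)
    as [c2 [k2 [Hc2 [F0 [F1 Hk2]]]]].
  destruct (chain_app Z δ c1 k1 c2 k2 Hc1 Hc2 ltac:(congruence)) as [c [Hc [G0 G1]]].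
  exists m; split; [exact Hm|].
  exists c, (k1 + k2)%nat; split; [exact Hc | split; [congruence | split; [congruence|]]].
  apply Nat.divide_add_r; assumption.
Qed.

(** * Compactness of products of finite alphabets *)

Definition infinitely_often (P : nat -> Prop) : Prop :=
  forall K, exists k, (K <= k)%nat /\ P k.

Lemma infinitely_often_True : infinitely_often (fun _ => True).
Proof. intro K; exists K; auto. Qed.

Lemma infinitely_often_pigeonhole {A} (l : list A) (P : nat -> Prop) (f : nat -> A) :
  infinitely_often P -> (forall k, P k -> In (f k) l) ->
  exists a, infinitely_often (fun k => P k /\ f k = a).
Proof.
  revert P; induction l as [|a l IH]; intros P HP Hl.
  - destruct (HP 0%nat) as [k [_ Pk]]; destruct (Hl k Pk).
  - destruct (classic (infinitely_often (fun k => P k /\ f k = a))) as [Ha | Ha];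
      [exists a; exact Ha|].
    apply not_all_ex_not in Ha as [K0 HK0].
    destruct (IH (fun k => P k /\ (K0 <= k)%nat)) as [b Hb].
    + intro K; destruct (HP (Nat.max K K0)) as [k [Hk Pk]].
      exists k; split; [lia | split; [exact Pk | lia]].
    + intros k [Pk Hk]; destruct (Hl k Pk) as [E | E]; [|exact E].
      exfalso; apply HK0; exists k; auto.
    + exists b; intro K; destruct (Hb K) as [k [Hk [[Pk _] E]]]; exists k; auto.
Qed.

Definition agree_block {T : nat -> Type} (B : nat) (x y : forall n, nat -> T n) : Prop :=
  forall n, (n < B)%nat -> agree B (x n) (y n).

Lemma agree_block_le {T : nat -> Type} B B' (x y : forall n, nat -> T n) :
  (B' <= B)%nat -> agree_block B x y -> agree_block B' x y.
Proof. intros HB H n Hn; apply (agree_le B); [lia | apply H; lia]. Qed.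

Lemma agree_block_sym {T : nat -> Type} B (x y : forall n, nat -> T n) :
  agree_block B x y -> agree_block B y x.
Proof. intros H n Hn; apply agree_sym, H, Hn. Qed.

Lemma agree_block_trans {T : nat -> Type} B (x y z : forall n, nat -> T n) :
  agree_block B x y -> agree_block B y z -> agree_block B x z.
Proof. intros H1 H2 n Hn; eapply agree_trans; [apply H1 | apply H2]; exact Hn. Qed.

Definition cluster_point {T : nat -> Type} (s : nat -> forall n, nat -> T n)
    (c : forall n, nat -> T n) : Prop :=
  forall B K, exists k, (K <= k)%nat /\ agree_block B (s k) c.

Definition infinite_index_set : Type := {P : nat -> Prop | infinitely_often P}.

Section Diagonal.

Variables (T : nat -> Type) (HT : forall n, finite_type (T n)).
Variable s : nat -> forall n, nat -> T n.

Lemma infinitely_often_agree_coords (cs : list (nat * nat)) P :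
  infinitely_often P -> exists k0, P k0 /\
    infinitely_often (fun k => P k /\
      forall c, In c cs -> s k (fst c) (snd c) = s k0 (fst c) (snd c)).
Proof.
  revert P; induction cs as [|c cs IH]; intros P HP.
  - destruct (HP 0%nat) as [k0 [_ Pk0]]; exists k0; split; [exact Pk0|].
    intro K; destruct (HP K) as [k [Hk Pk]]; exists k; repeat split; auto.
    intros c [].
  - destruct (HT (fst c)) as [l Hl].
    destruct (infinitely_often_pigeonhole l P (fun k => s k (fst c) (snd c)) HP (fun k _ => Hl _))
      as [a Ha].
    destruct (IH _ Ha) as [k0 [[Pk0 Ek0] Hk0]]; exists k0; split; [exact Pk0|].
    intro K; destruct (Hk0 K) as [k [Hk [[Pk Ek] Hcs]]]; exists k; repeat split; auto.
    intros c' [<- | Hc']; [congruence | auto].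
Qed.

Lemma infinitely_often_agree_block P B K :
  infinitely_often P -> exists k0, P k0 /\ (K <= k0)%nat /\
    infinitely_often (fun k => P k /\ agree_block B (s k) (s k0)).
Proof.
  intros HP.
  destruct (infinitely_often_agree_coords (list_prod (seq 0 B) (seq 0 B))
              (fun k => P k /\ (K <= k)%nat)) as [k0 [[Pk0 Hk0] Hio]].
  { intro K'; destruct (HP (Nat.max K K')) as [k [Hk Pk]].
    exists k; split; [lia | split; [exact Pk | lia]]. }
  exists k0; split; [exact Pk0 | split; [exact Hk0|]].
  intro K'; destruct (Hio K') as [k [Hk [[Pk _] Hcs]]].
  exists k; split; [exact Hk | split; [exact Pk|]].
  intros n Hn i Hi; apply (Hcs (n, i)), in_prod; apply in_seq; lia.
Qed.

Definition refine_pivot (j : nat) (P : infinite_index_set) :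
  {k0 | proj1_sig P k0 /\ (j <= k0)%nat /\
        infinitely_often (fun k => proj1_sig P k /\ agree_block j (s k) (s k0))} :=
  constructive_indefinite_description _
    (infinitely_often_agree_block (proj1_sig P) j j (proj2_sig P)).

Fixpoint stage (j : nat) : infinite_index_set :=
  match j with
  | O => exist _ (fun _ => True) infinitely_often_True
  | S j' =>
      let r := refine_pivot j' (stage j') in
      exist _ (fun k => proj1_sig (stage j') k /\ agree_block j' (s k) (s (proj1_sig r)))
        (proj2 (proj2 (proj2_sig r)))
  end.

Definition pivot (j : nat) : nat := proj1_sig (refine_pivot j (stage j)).

Lemma pivot_in_stage j : proj1_sig (stage j) (pivot j).
Proof. exact (proj1 (proj2_sig (refine_pivot j (stage j)))). Qed.

Lemma pivot_ge j : (j <= pivot j)%nat.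
Proof. exact (proj1 (proj2 (proj2_sig (refine_pivot j (stage j))))). Qed.

Lemma stage_agree_pivot j j' k :
  (j < j')%nat -> proj1_sig (stage j') k -> agree_block j (s k) (s (pivot j)).
Proof.
  induction j' as [|j' IH]; intros Hj Hk; [lia|]; destruct Hk as [Hk Hag].
  destruct (Nat.eq_dec j j') as [<- | Hne]; [exact Hag | apply IH; [lia | exact Hk]].
Qed.

Lemma exists_cluster_point : exists c, cluster_point s c.
Proof.
  exists (fun n i => s (pivot (S (n + i))) n i).
  intros B K; exists (pivot (B + B + K)); split; [pose proof (pivot_ge (B + B + K)); lia|].
  intros n Hn i Hi.
  apply (stage_agree_pivot (S (n + i)) (B + B + K)); [lia | apply pivot_in_stage | lia | lia].
Qed.

End Diagonal.

Lemma exists_cluster_point_seq {A} (HA : finite_type A) (s : nat -> nat -> A) :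
  exists c, forall m K, exists k, (K <= k)%nat /\ agree m (s k) c.
Proof.
  destruct (exists_cluster_point (fun _ => A) (fun _ => HA) (fun k _ => s k)) as [c Hc].
  exists (c 0%nat); intros m K; destruct (Hc (S m) K) as [k [Hk Hkc]].
  exists k; split; [exact Hk | apply (agree_le (S m)); [lia | apply Hkc; lia]].
Qed.

(** * Uniform estimates on compact sets *)

Definition continuous_on {A A'} (Z : (nat -> A) -> Prop) (g : (nat -> A) -> nat -> A') : Prop :=
  forall y, Z y -> forall m, exists m', forall z, Z z -> agree m' y z -> agree m (g y) (g z).

Definition uniformly_continuous_on {A A'} (Z : (nat -> A) -> Prop)
    (g : (nat -> A) -> nat -> A') : Prop :=
  forall m, exists m', forall y z, Z y -> Z z -> agree m' y z -> agree m (g y) (g z).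

Lemma closed_continuous_uniform {A A'} (HA : finite_type A) (Z : (nat -> A) -> Prop)
    (g : (nat -> A) -> nat -> A') :
  closed_set Z -> continuous_on Z g -> uniformly_continuous_on Z g.
Proof.
  intros HZ Hg m; apply NNPP; intro Hno.
  assert (Hbad : forall k, exists yz : (nat -> A) * (nat -> A), Z (fst yz) /\ Z (snd yz) /\
            agree k (fst yz) (snd yz) /\ ~ agree m (g (fst yz)) (g (snd yz))).
  { intro k; apply NNPP; intro Hk; apply Hno; exists k; intros y z Hy Hz Hyz.
    apply NNPP; intro Hm; apply Hk; exists (y, z); auto. }
  destruct (choice _ Hbad) as [yz Hyz].
  destruct (exists_cluster_point_seq HA (fun k => fst (yz k))) as [c Hc].
  assert (Zc : Z c).
  { apply HZ; intro m'; destruct (Hc m' 0%nat) as [k [_ Hk]].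
    exists (fst (yz k)); split; [apply Hyz | exact Hk]. }
  destruct (Hg c Zc m) as [m0 Hm0].
  destruct (Hc m0 m0) as [k [Hk Hkc]].
  destruct (Hyz k) as [Zy [Zz [Hyz_k Hfar]]].
  apply Hfar, agree_trans with (g c).
  - apply agree_sym, Hm0; [exact Zy | apply agree_sym, Hkc].
  - apply Hm0; [exact Zz|].
    apply agree_trans with (fst (yz k)); [apply agree_sym, Hkc | apply (agree_le k); auto].
Qed.

Definition block_closed {T : nat -> Type} (P : (forall n, nat -> T n) -> Prop) : Prop :=
  forall c, (forall B, exists t, P t /\ agree_block B t c) -> P c.

Lemma block_closed_cluster_point {T : nat -> Type} (P : (forall n, nat -> T n) -> Prop) s c :
  block_closed P -> (forall k, P (s k)) -> cluster_point s c -> P c.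
Proof.
  intros HP Hs Hc; apply HP; intro B; destruct (Hc B 0%nat) as [k [_ Hk]].
  exists (s k); split; [apply Hs | exact Hk].
Qed.

Definition block_coords (B : nat) : list (nat * nat) := map (fun n => (n, B)) (seq 0 B).

Lemma cyl_nbhd_block_coords {T : nat -> Type} B (x y : LimPt T) :
  cyl_nbhd x (block_coords B) y -> agree_block B y x.
Proof.
  intros H n Hn; apply (H (n, B)), in_map_iff.
  exists n; split; [reflexivity | apply in_seq; lia].
Qed.

Lemma agree_block_cyl_nbhd {T : nat -> Type} (L : list (nat * nat)) :
  exists B, forall x y : LimPt T, agree_block B y x -> cyl_nbhd x L y.
Proof.
  induction L as [|[n k] L [B HB]]; [exists 0%nat; intros x y _ nk []|].
  exists (Nat.max B (Nat.max (S n) k)); intros x y H nk [<- | Hnk].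
  - apply (agree_le (Nat.max B (Nat.max (S n) k))); cbn [fst snd]; [lia | apply H; lia].
  - apply HB; [apply (agree_block_le (Nat.max B (Nat.max (S n) k))); [lia | exact H] | exact Hnk].
Qed.

Section CompatibleMetric.

Variables (T : nat -> Type) (HT : forall n, finite_type (T n)).
Variables (P : LimPt T -> Prop) (d : LimPt T -> LimPt T -> R).
Hypotheses (HP : block_closed P) (Hd : is_metric_on P d) (Hdc : compatible_metric P d).

Lemma ball_contains_block x e :
  P x -> 0 < e -> exists B, forall y, P y -> agree_block B y x -> d x y < e.
Proof.
  intros Px He; destruct (proj1 Hdc x Px e He) as [L HL].
  destruct (agree_block_cyl_nbhd (T := T) L) as [B HB].
  exists B; intros y Py Hy; apply HL, HB; assumption.
Qed.

Lemma block_contains_ball x B :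
  P x -> exists e, 0 < e /\ forall y, P y -> d x y < e -> agree_block B y x.
Proof.
  intros Px; destruct (proj2 Hdc x Px (block_coords B)) as [e [He HL]].
  exists e; split; [exact He|]; intros y Py Hy; apply cyl_nbhd_block_coords, HL; assumption.
Qed.

Lemma uniform_ball_contains_block e :
  0 < e -> exists B, forall x y, P x -> P y -> agree_block B x y -> d x y < e.
Proof.
  intros He; apply NNPP; intro Hno.
  assert (Hbad : forall k, exists xy : LimPt T * LimPt T, P (fst xy) /\ P (snd xy) /\
            agree_block k (fst xy) (snd xy) /\ ~ d (fst xy) (snd xy) < e).
  { intro k; apply NNPP; intro Hk; apply Hno; exists k; intros x y Px Py Hxy.
    apply NNPP; intro Hfar; apply Hk; exists (x, y); auto. }
  destruct (choice _ Hbad) as [xy Hxy].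
  destruct (exists_cluster_point T HT (fun k => fst (xy k))) as [c Hc].
  assert (Pc : P c).
  { apply (block_closed_cluster_point P (fun k => fst (xy k)) c HP); [|exact Hc].
    intro k; apply Hxy. }
  destruct (ball_contains_block c (e / 2) Pc ltac:(lra)) as [B HB].
  destruct (Hc B B) as [k [Hk Hkc]].
  destruct (Hxy k) as [Px [Py [Hagree Hfar]]].
  destruct Hd as [_ [_ [Hsym Htri]]].
  assert (Hx : d c (fst (xy k)) < e / 2) by (apply HB; assumption).
  assert (Hy : d c (snd (xy k)) < e / 2).
  { apply HB; [exact Py|]; apply agree_block_trans with (fst (xy k)); [|exact Hkc].
    apply agree_block_sym, (agree_block_le k); assumption. }
  apply Hfar; pose proof (Htri _ c _ Px Pc Py); rewrite (Hsym _ c Px Pc) in *; lra.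
Qed.

Lemma uniform_block_contains_ball B :
  exists e, 0 < e /\ forall x y, P x -> P y -> d x y < e -> agree_block B x y.
Proof.
  apply NNPP; intro Hno.
  assert (Hbad : forall k, exists xy : LimPt T * LimPt T, P (fst xy) /\ P (snd xy) /\
            d (fst xy) (snd xy) < / INR (S k) /\ ~ agree_block B (fst xy) (snd xy)).
  { intro k; apply NNPP; intro Hk; apply Hno; exists (/ INR (S k)).
    split; [apply Rinv_0_lt_compat, lt_0_INR; lia|]; intros x y Px Py Hxy.
    apply NNPP; intro Hfar; apply Hk; exists (x, y); auto. }
  destruct (choice _ Hbad) as [xy Hxy].
  destruct (exists_cluster_point T HT (fun k => fst (xy k))) as [c Hc].
  assert (Pc : P c).
  { apply (block_closed_cluster_point P (fun k => fst (xy k)) c HP); [|exact Hc].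
    intro k; apply Hxy. }
  destruct (block_contains_ball c B Pc) as [e [He HcB]].
  destruct (ball_contains_block c (e / 2) Pc ltac:(lra)) as [B0 HB0].
  destruct (archimed_cor1 (e / 2) ltac:(lra)) as [K [HK HK0]].
  destruct (Hc B0 K) as [k [Hk Hkc]].
  destruct (Hxy k) as [Px [Py [Hclose Hfar]]].
  destruct Hd as [_ [_ [_ Htri]]].
  assert (Hk_small : / INR (S k) < e / 2).
  { apply Rle_lt_trans with (/ INR K); [|exact HK].
    apply Rinv_le_contravar; [apply lt_0_INR; lia | apply le_INR; lia]. }
  assert (Hx : d c (fst (xy k)) < e / 2) by (apply HB0; assumption).
  pose proof (Htri _ _ _ Pc Px Py).
  apply Hfar, agree_block_trans with c; [apply HcB; [exact Px | lra]|].
  apply agree_block_sym, HcB; [exact Py | lra].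
Qed.

End CompatibleMetric.

(** * Inverse limits of subshifts *)

Section InverseLimit.

Variables (T : nat -> Type) (X : forall n, (nat -> T n) -> Prop).
Variable p : forall n, (nat -> T (S n)) -> (nat -> T n).
Hypotheses (HX : forall n, is_SFT (X n)) (Hp : equivariant_seq T X p).

Lemma factor_alphabet_finite n : finite_type (T n).
Proof. exact (proj1 (HX n)). Qed.

Lemma factor_shift n x : X n x -> X n (shift x).
Proof. destruct (is_SFT_windows _ (HX n)) as [N HN]; exact (sft_shift _ _ N HN x). Qed.

Lemma factor_iter_shift n k x : X n x -> X n (Nat.iter k shift x).
Proof. destruct (is_SFT_windows _ (HX n)) as [N HN]; exact (sft_iter_shift _ _ N HN k x). Qed.

Lemma bonding_uniformly_continuous n : uniformly_continuous_on (X (S n)) (p n).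
Proof.
  destruct (is_SFT_windows _ (HX (S n))) as [N HN].
  apply closed_continuous_uniform;
    [apply factor_alphabet_finite | exact (sft_closed _ _ N HN) | exact (proj1 (proj2 (Hp n)))].
Qed.

Lemma bonding_iter_shift n i y :
  X (S n) y -> p n (Nat.iter i shift y) = Nat.iter i shift (p n y).
Proof.
  intros Hy; induction i as [|i IH]; [reflexivity|]; simpl; rewrite <- IH.
  apply (proj2 (Hp n)), factor_iter_shift, Hy.
Qed.

Lemma inLim_block_closed : block_closed (inLim T X p).
Proof.
  intros c Hc.
  assert (Xc : forall n, X n (c n)).
  { intro n; destruct (is_SFT_windows _ (HX n)) as [N HN]; apply (sft_closed _ _ N HN).
    intro m; destruct (Hc (S (n + m))) as [t [Pt Ht]]; exists (t n); split; [apply Pt|].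
    apply (agree_le (S (n + m))); [lia | apply Ht; lia]. }
  intro n; split; [apply Xc|]; apply functional_extensionality; intro i.
  destruct (proj1 (proj2 (Hp n)) (c (S n)) (Xc (S n)) (S i)) as [m Hm].
  destruct (Hc (S (S n + m + i))) as [t [Pt Ht]].
  assert (Hcont : agree (S i) (p n (c (S n))) (t n)).
  { rewrite <- (proj2 (Pt n)); apply Hm; [apply Pt|].
    apply agree_sym, (agree_le (S (S n + m + i))); [lia | apply Ht; lia]. }
  rewrite (Hcont i) by lia; apply Ht; lia.
Qed.

Lemma iter_limf_apply i (x : LimPt T) n : Nat.iter i limf x n = Nat.iter i shift (x n).
Proof.
  induction i as [|i IH]; [reflexivity|].
  simpl; unfold limf at 1; rewrite IH; reflexivity.
Qed.

Lemma inLim_limf x : inLim T X p x -> inLim T X p (limf x).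
Proof.
  intros Hx n; unfold limf; split; [apply factor_shift, Hx|].
  rewrite (proj2 (proj2 (Hp n))) by apply Hx; rewrite (proj2 (Hx n)); reflexivity.
Qed.

Lemma inLim_iter_limf i x : inLim T X p x -> inLim T X p (Nat.iter i limf x).
Proof. induction i; simpl; auto using inLim_limf. Qed.

Lemma inLim_agree_lower_coordinates n B :
  exists r, forall x y, inLim T X p x -> inLim T X p y ->
    agree r (x n) (y n) -> forall k, (k <= n)%nat -> agree B (x k) (y k).
Proof.
  induction n as [|n [r Hr]].
  - exists B; intros x y _ _ H k Hk; replace k with 0%nat by lia; exact H.
  - destruct (bonding_uniformly_continuous n r) as [g Hg].
    exists (Nat.max B g); intros x y Hx Hy H k Hk.
    destruct (Nat.eq_dec k (S n)) as [-> | Hne]; [apply (agree_le (Nat.max B g)); [lia | exact H]|].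
    apply (Hr x y Hx Hy); [|lia].
    rewrite <- (proj2 (Hx n)), <- (proj2 (Hy n)).
    apply Hg; [apply Hx | apply Hy | apply (agree_le (Nat.max B g)); [lia | exact H]].
Qed.

Variable d : LimPt T -> LimPt T -> R.
Hypotheses (Hd : is_metric_on (inLim T X p) d) (Hdc : compatible_metric (inLim T X p) d).

Lemma pseudo_orbit_coordinate_agree n M :
  exists δ, 0 < δ /\ forall xs : nat -> LimPt T, (forall i, inLim T X p (xs i)) ->
    (forall i, d (limf (xs i)) (xs (S i)) <= δ) ->
    forall i, agree M (shift (xs i n)) (xs (S i) n).
Proof.
  destruct (uniform_block_contains_ball T factor_alphabet_finite _ d
              inLim_block_closed Hd Hdc (S n + M)) as [e [He Hclose]].
  exists (e / 2); split; [lra|]; intros xs Hxs Hpo i.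
  apply (agree_le (S n + M)); [lia|].
  apply (Hclose (limf (xs i)) (xs (S i))); [apply inLim_limf, Hxs | apply Hxs | | lia].
  specialize (Hpo i); lra.
Qed.

Lemma close_of_agreeing_lifts eps :
  0 < eps -> exists n g, forall x y z w,
    inLim T X p x -> inLim T X p y -> X (S n) z -> X (S n) w ->
    x n = p n z -> y n = p n w -> agree g z w -> d x y < eps.
Proof.
  intros Heps.
  destruct (uniform_ball_contains_block T factor_alphabet_finite _ d
              inLim_block_closed Hd Hdc eps Heps) as [B HB].
  destruct (inLim_agree_lower_coordinates B B) as [r Hr].
  destruct (bonding_uniformly_continuous B r) as [g Hg].
  exists B, g; intros x y z w Hx Hy Hz Hw Hxz Hyw Hzw.
  apply HB; [exact Hx | exact Hy|]; intros k Hk.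
  apply (Hr x y Hx Hy); [rewrite Hxz, Hyw; apply Hg; assumption | lia].
Qed.

End InverseLimit.

(** * Threads through an inverse sequence with MLC(1) *)

Definition liftable {T : nat -> Type} (D : forall n, (nat -> T n) -> Prop)
    (p : forall n, (nat -> T (S n)) -> (nat -> T n)) (n : nat) (t : nat -> T n) : Prop :=
  D n t /\ exists y, D (S n) y /\ p n y = t.

Section Threads.

Variables (T : nat -> Type) (D : forall n, (nat -> T n) -> Prop).
Variable p : forall n, (nat -> T (S n)) -> (nat -> T n).
Hypotheses (HDp : forall n y, D (S n) y -> D n (p n y)) (HMLC : MLC1 T D p).

Lemma liftable_lift n t : liftable D p n t -> exists t', liftable D p (S n) t' /\ p n t' = t.
Proof.
  intros [Dt Hy]; destruct (proj1 (HMLC n t) Hy) as [w [Dw Ew]].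
  exists (p (S n) w); split; [split; [apply HDp, Dw | exists w; auto] | exact Ew].
Qed.

Definition lift_step n (t : {t | liftable D p n t}) :
  {t' | liftable D p (S n) t' /\ p n t' = proj1_sig t} :=
  constructive_indefinite_description _ (liftable_lift n _ (proj2_sig t)).

Fixpoint lift_seq (z : {t | liftable D p 0 t}) (n : nat) : {t | liftable D p n t} :=
  match n with
  | O => z
  | S n' => let t := lift_step n' (lift_seq z n') in exist _ (proj1_sig t) (proj1 (proj2_sig t))
  end.

Lemma thread_from_base z : liftable D p 0 z -> exists x, inLim T D p x /\ x 0%nat = z.
Proof.
  intros Hz; exists (fun n => proj1_sig (lift_seq (exist _ z Hz) n)); split; [|reflexivity].
  intro n; split; [apply (proj2_sig (lift_seq _ n)) |].
  exact (proj2 (proj2_sig (lift_step n (lift_seq _ n)))).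
Qed.

End Threads.

(* Induction on [k] shifts the whole inverse sequence by one index. *)
Lemma MLC1_thread k : forall (T : nat -> Type) (D : forall n, (nat -> T n) -> Prop)
    (p : forall n, (nat -> T (S n)) -> (nat -> T n)),
  (forall n y, D (S n) y -> D n (p n y)) -> MLC1 T D p ->
  forall z, liftable D p k z -> exists x, inLim T D p x /\ x k = z.
Proof.
  induction k as [|k IH]; intros T D p HDp HMLC z Hz.
  { exact (thread_from_base T D p HDp HMLC z Hz). }
  destruct (IH (fun n => T (S n)) (fun n => D (S n)) (fun n => p (S n))
              (fun n => HDp (S n)) (fun n => HMLC (S n)) z Hz) as [x [Hx Hxk]].
  exists (fun n => match n return nat -> T n with O => p 0%nat (x 0%nat) | S n' => x n' end).
  split; [|exact Hxk]; intros [|n]; [split; [apply HDp, Hx | reflexivity] | apply Hx].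
Qed.

Theorem lemma5p2
  (S : nat -> Type) (X : forall n, (nat -> S n) -> Prop)
  (p : forall n, (nat -> S (Datatypes.S n)) -> (nat -> S n))
  (HX : forall n, transitive_SFT (X n))
  (Hp : equivariant_seq S X p)
  (HMLC : MLC1 S X p)
  (d : LimPt S -> LimPt S -> R)
  (Hd : is_metric_on (inLim S X p) d)
  (Hdc : compatible_metric (inLim S X p) d)
  (Ds : forall n, (nat -> S n) -> Prop)
  (HDs : in_D_pi S X p Ds)
  (HDMLC : MLC1 S Ds p) :
  forall eps, 0 < eps -> exists delta, 0 < delta /\
    forall xs : nat -> LimPt S,
      (forall i, inLim S X p (xs i)) ->
      (forall i, d (limf (xs i)) (xs (Datatypes.S i)) <= delta) ->
      bracket S X p Ds (xs 0%nat) ->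
      exists x, bracket S X p Ds x /\
        forall i, d (Nat.iter i limf x) (xs i) <= eps.
Proof.
  intros eps Heps.
  pose proof (fun n => proj1 (HX n)) as HSFT.
  destruct (close_of_agreeing_lifts S X p HSFT Hp d Hd Hdc eps Heps) as [B [g Hclose]].
  destruct (is_SFT_windows _ (HSFT (Datatypes.S B))) as [N HN].
  destruct (chain_class_open _ _ (HX (Datatypes.S B)) (proj1 (HDs (Datatypes.S B)))) as [r HDopen].
  set (M := (N + g + r)%nat).
  destruct (pseudo_orbit_coordinate_agree S X p HSFT Hp d Hd Hdc (Datatypes.S B) M)
    as [delta [Hdelta Hagree]].
  exists delta; split; [exact Hdelta|]; intros xs Hxs Hpo [_ HDxs].
  destruct (sft_shadowing _ _ N HN (fun i => xs i (Datatypes.S B)) M)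
    as [z [Xz Hz]]; [lia | intro i; apply Hxs | exact (Hagree xs Hxs Hpo) |].
  assert (Dz : Ds (Datatypes.S B) z).
  { apply (HDopen (xs 0%nat (Datatypes.S B))); [apply HDxs | exact Xz|].
    apply agree_sym, (agree_le (Datatypes.S M)); [lia | exact (Hz 0%nat)]. }
  destruct (MLC1_thread B S Ds p (fun n => proj2 (HDs n)) HDMLC (p B z))
    as [x [Hx HxB]]; [split; [apply HDs, Dz | exists z; auto]|].
  assert (HxX : inLim S X p x).
  { intro n; split; [apply (chain_class_sub _ _ (proj1 (HDs n))), Hx | apply Hx]. }
  exists x; split; [split; [exact HxX | intro n; apply Hx]|]; intro i; left.
  apply (Hclose _ _ (Nat.iter i shift z) (xs i (Datatypes.S B)));
    [apply inLim_iter_limf; auto | apply Hxs | apply factor_iter_shift; auto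
    | apply Hxs | | symmetry; apply Hxs | apply (agree_le (Datatypes.S M)); [lia | apply Hz]].
  rewrite iter_limf_apply, HxB, (bonding_iter_shift S X p HSFT Hp); auto.
Qed.
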